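(* Let $\Gamma$ be a finite connected $2$-distance-transitive graph of valency $k\ge3$. Then one of the following holds: (1) $\Gamma$ is a distance-transitive strongly regular graph; (2) $\Gamma$ has diameter $d\ge3$ and $b_1\ge\max\{c_2,\frac13(k+1)\}$.
   Context: $\Gamma$ is $2$-distance-transitive if its diameter is at least $2$, $\mathrm{Aut}(\Gamma)$ is vertex-transitive, and $\mathrm{Aut}(\Gamma)_u$ is transitive on $\Gamma(u)$ and $\Gamma_2(u)$ for each $u$. $b_1$ is the number of neighbours of a vertex $w\in\Gamma(u)$ lying at distance $2$ from $u$, and $c_2$ is the number of common neighbours of two vertices at distance $2$. Distance-transitive means $\mathrm{Aut}(\Gamma)$ is transitive on ordered pairs of vertices at distance $i$ for each $i$. *)

From mathcomp Require Import all_boot all_fingroup.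
Set Implicit Arguments. Unset Strict Implicit. Unset Printing Implicit Defensive.

Definition simple_graph (T : finType) (e : rel T) : Prop :=
  symmetric e /\ irreflexive e.

Fixpoint ball (T : finType) (e : rel T) (n : nat) (x : T) : {set T} :=
  match n with
  | 0 => [set x]
  | n'.+1 => ball e n' x :|: [set z | [exists y in ball e n' x, e y z]]
  end.

(* graph distance: least n with y in ball e n x (for a connected graph this
   is < #|T|; the value #|T|.+1 only occurs for unreachable y). *)
Definition dist (T : finType) (e : rel T) (x y : T) : nat :=
  find (fun n => y \in ball e n x) (iota 0 #|T|.+1).

Definition connected_graph (T : finType) (e : rel T) : Prop :=
  forall x y : T, connect e x y.

Definition diameter (T : finType) (e : rel T) : nat :=
  \max_(x : T) \max_(y : T) dist e x y.

Definition sphere (T : finType) (e : rel T) (i : nat) (u : T) : {set T} :=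
  [set v | dist e u v == i].

Definition Aut (T : finType) (e : rel T) : {set {perm T}} :=
  [set g : {perm T} | [forall x, forall y, e (g x) (g y) == e x y]].

Definition vertex_transitive (T : finType) (e : rel T) : Prop :=
  forall u v : T, exists2 g, g \in Aut e & g u = v.

Definition stab_transitive_on_sphere (T : finType) (e : rel T) (i : nat) : Prop :=
  forall u v w : T, v \in sphere e i u -> w \in sphere e i u ->
    exists2 g, g \in Aut e & (g u = u /\ g v = w).

Definition two_distance_transitive (T : finType) (e : rel T) : Prop :=
  2 <= diameter e /\ vertex_transitive e /\
  stab_transitive_on_sphere e 1 /\ stab_transitive_on_sphere e 2.

Definition distance_transitive (T : finType) (e : rel T) : Prop :=
  forall (i : nat) (u v u' v' : T), dist e u v = i -> dist e u' v' = i ->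
    exists2 g, g \in Aut e & (g u = u' /\ g v = v').

Definition regular_of_valency (T : finType) (e : rel T) (k : nat) : Prop :=
  forall u : T, #|[set v | e u v]| = k.

Definition common_nbrs (T : finType) (e : rel T) (x y : T) : nat :=
  #|[set z | e x z && e y z]|.

Definition strongly_regular (T : finType) (e : rel T) : Prop :=
  exists k lam mu : nat,
    regular_of_valency e k /\
    (forall x y : T, e x y -> common_nbrs e x y = lam) /\
    (forall x y : T, x != y -> ~~ e x y -> common_nbrs e x y = mu).

Definition b1 (T : finType) (e : rel T) (u w : T) : nat :=
  #|[set x | e w x && (dist e u x == 2)]|.

From Pilot Require Import Defs.
From mathcomp Require Import all_boot all_fingroup.
Set Implicit Arguments. Unset Strict Implicit. Unset Printing Implicit Defensive.

(* Transitivity of the automorphism group on pairs at distance 1 and at distance 2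
   makes b_1 and c_2 constants of the graph.  If the diameter is at most 2 these are
   the only distances besides 0, so the graph is distance-transitive, and it is
   strongly regular with lambda and mu constant for the same reason.  Otherwise take
   a geodesic x - w - y - z with d(x,z) = 3.  Every common neighbour of w and z is at
   distance 2 from x, whence c_2 <= b_1.  Apart from the c_2 - 1 common neighbours
   of x and y other than w, every neighbour of w is at distance 2 from x or from y
   (x itself from y, and y from x), whence k <= c_2 - 1 + 2 b_1 <= 3 b_1 - 1. *)

Section Balls.

Variables (T : finType) (e : rel T).

Lemma mem_ball0 x z : (z \in ball e 0 x) = (z == x).
Proof. by rewrite inE. Qed.

Lemma mem_ballS n x z :
  (z \in ball e n.+1 x) = (z \in ball e n x) || [exists y in ball e n x, e y z].
Proof. by rewrite [ball e n.+1 x]/= !inE. Qed.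

Lemma mem_ball1 x z : (z \in ball e 1 x) = (z == x) || e x z.
Proof.
rewrite mem_ballS mem_ball0; congr orb; apply/existsP/idP => [[y]|exz].
  by rewrite mem_ball0 => /andP[/eqP ->].
by exists x; rewrite mem_ball0 eqxx.
Qed.

Lemma ball_step n x y z : y \in ball e n x -> e y z -> z \in ball e n.+1 x.
Proof.
by move=> yn eyz; rewrite mem_ballS; apply/orP; right; apply/existsP; exists y; rewrite yn.
Qed.

Lemma ball_mono x : {homo ball e ^~ x : m n / m <= n >-> m \subset n}.
Proof.
move=> m n; elim: n => [|n IHn]; first by rewrite leqn0 => /eqP ->.
rewrite leq_eqVlt => /orP[/eqP -> // | /IHn/subset_trans]; apply.
by apply/subsetP => z zn; rewrite mem_ballS zn.
Qed.

Lemma path_last_ball x p : path e x p -> last x p \in ball e (size p) x.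
Proof.
elim/last_ind: p => [|p z IHp]; first by rewrite mem_ball0.
rewrite rcons_path last_rcons size_rcons => /andP[/IHp]; exact: ball_step.
Qed.

Lemma connect_ball x y : connect e x y -> y \in ball e #|T| x.
Proof.
case/connectP=> p /shortenP[q path_q uniq_q _] ->.
apply: subsetP (path_last_ball path_q); apply: ball_mono.
have := max_card (mem (x :: q)); rewrite (card_uniqP uniq_q); exact: ltnW.
Qed.

End Balls.

Section Distance.

Variables (T : finType) (e : rel T).
Hypothesis e_conn : connected_graph e.

Lemma dist_leqE x y n : (dist e x y <= n) = (y \in ball e n x).
Proof.
have reach : has (fun m => y \in ball e m x) (iota 0 #|T|.+1).
  by apply/hasP; exists #|T|; [rewrite mem_iota add0n ltnSn | exact: connect_ball].
have dist_lt : dist e x y < #|T|.+1 by rewrite -[#|T|.+1](size_iota 0) -has_find.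
apply/idP/idP => [le_dn | yn].
  apply: (subsetP (ball_mono e x le_dn)).
  by have := nth_find 0 reach; rewrite nth_iota.
rewrite leqNgt; apply/negP => lt_nd.
have := before_find 0 lt_nd; rewrite nth_iota ?(ltn_trans lt_nd) //= add0n.
by rewrite yn.
Qed.

Lemma dist_eq0 x y : (dist e x y == 0) = (y == x).
Proof. by rewrite -leqn0 dist_leqE mem_ball0. Qed.

Lemma dist_edge x y z : e y z -> dist e x z <= (dist e x y).+1.
Proof. by move=> eyz; rewrite dist_leqE; apply: ball_step eyz; rewrite -dist_leqE. Qed.

Lemma dist_pred x z n : dist e x z = n.+1 -> exists2 y, dist e x y = n & e y z.
Proof.
move=> dz; have : z \in ball e n.+1 x by rewrite -dist_leqE dz.
rewrite mem_ballS -dist_leqE dz ltnn /= => /existsP[y /andP[yn eyz]].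
exists y => //; apply/eqP; rewrite eqn_leq dist_leqE yn -ltnS -dz.
exact: dist_edge.
Qed.

Lemma exists_dist x y n : n <= dist e x y -> exists z, dist e x z = n.
Proof.
move dy: (dist e x y) => m; elim: m y dy => [|m IHm] y dy.
  by rewrite leqn0 => /eqP ->; exists y.
rewrite leq_eqVlt => /orP[/eqP -> | lt_nm]; first by exists y.
by have [y' dy' _] := dist_pred dy; apply: IHm dy' lt_nm.
Qed.

Lemma dist_triangle x y z : dist e x z <= dist e x y + dist e y z.
Proof.
move dz: (dist e y z) => n; elim: n z dz => [|n IHn] z dz.
  by move/eqP: dz; rewrite dist_eq0 addn0 => /eqP ->.
have [z' dz' ez'z] := dist_pred dz.
by rewrite addnS; apply: leq_trans (dist_edge x ez'z) _; rewrite ltnS IHn.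
Qed.

Hypotheses (e_sym : symmetric e) (e_irr : irreflexive e).

Lemma dist1E x y : (dist e x y == 1) = e x y.
Proof.
rewrite eqn_leq dist_leqE mem_ball1 lt0n dist_eq0.
by case: (eqVneq y x) => [-> | _]; rewrite ?e_irr ?andbT.
Qed.

Lemma dist2_nbrs w a v : e w a -> e w v -> v != a -> ~~ e a v -> dist e a v = 2.
Proof.
move=> ewa ewv nva nav; apply/eqP; rewrite eqn_leq dist_leqE.
rewrite (@ball_step _ _ 1 _ w) // ?mem_ball1 1?e_sym ?ewa ?orbT //=.
by rewrite ltnNge dist_leqE mem_ball1 negb_or nva.
Qed.

End Distance.

Section Diameter.

Variables (T : finType) (e : rel T).

Lemma dist_le_diameter x y : dist e x y <= diameter e.
Proof. exact: leq_trans (leq_bigmax (F := dist e x) y) (leq_bigmax x). Qed.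

Lemma diameter_attained : 0 < diameter e -> exists x y, dist e x y = diameter e.
Proof.
rewrite /diameter; case: (posnP #|T|) => [T0 | T_gt0].
  by rewrite big_pred0 // => x; have := card0_eq T0 x; rewrite !inE.
have [x ->] := eq_bigmax (fun x => \max_y dist e x y) T_gt0.
by have [y ->] := eq_bigmax (fun y => dist e x y) T_gt0; exists x, y.
Qed.

End Diameter.

Section Automorphisms.

Variables (T : finType) (e : rel T).
Implicit Types (g : {perm T}) (x y : T).

Lemma autE g x y : g \in Defs.Aut e -> e (g x) (g y) = e x y.
Proof. by rewrite inE => /forallP/(_ x)/forallP/(_ y)/eqP. Qed.

Lemma autM g h : g \in Defs.Aut e -> h \in Defs.Aut e -> (g * h)%g \in Defs.Aut e.
Proof.
move=> g_aut h_aut; rewrite inE; apply/forallP => x; apply/forallP => y.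
by rewrite !permM !autE.
Qed.

Lemma aut_ball g n x y :
  g \in Defs.Aut e -> (g y \in ball e n (g x)) = (y \in ball e n x).
Proof.
move=> g_aut; elim: n y => [|n IHn] y; first by rewrite !mem_ball0 (inj_eq perm_inj).
rewrite !mem_ballS IHn; congr orb; apply/existsP/existsP => [[z] | [z]].
  by rewrite -[z](permKV g) IHn autE // => ezy; exists (g^-1 z)%g.
by rewrite -IHn -(autE _ _ g_aut); exists (g z).
Qed.

Lemma aut_dist g x y : g \in Defs.Aut e -> dist e (g x) (g y) = dist e x y.
Proof. by move=> g_aut; apply: eq_find => n; apply: aut_ball. Qed.

Lemma aut_common_nbrs g x y :
  g \in Defs.Aut e -> common_nbrs e (g x) (g y) = common_nbrs e x y.
Proof.
move=> g_aut; rewrite /common_nbrs -(card_preimset _ (@perm_inj _ g)).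
by apply: eq_card => z; rewrite !inE !autE.
Qed.

Lemma aut_b1 g x y : g \in Defs.Aut e -> b1 e (g x) (g y) = b1 e x y.
Proof.
move=> g_aut; rewrite /b1 -(card_preimset _ (@perm_inj _ g)).
by apply: eq_card => z; rewrite !inE autE ?aut_dist.
Qed.

End Automorphisms.

Section Transitivity.

Variables (T : finType) (e : rel T).

Definition distance_transitive_at (i : nat) : Prop :=
  forall u v u' v' : T, dist e u v = i -> dist e u' v' = i ->
    exists2 g, g \in Defs.Aut e & (g u = u' /\ g v = v').

Lemma distance_transitive_at0 :
  connected_graph e -> vertex_transitive e -> distance_transitive_at 0.
Proof.
move=> e_conn e_vt u v u' v' /eqP + /eqP; rewrite !dist_eq0 // => /eqP-> /eqP->.
by have [g g_aut gu] := e_vt u u'; exists g.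
Qed.

Lemma distance_transitive_at_sphere i :
  vertex_transitive e -> stab_transitive_on_sphere e i -> distance_transitive_at i.
Proof.
move=> e_vt e_st u v u' v' duv du'v'.
have [g g_aut gu] := e_vt u u'.
have [h h_aut [hu' hv']] : exists2 h, h \in Defs.Aut e & (h u' = u' /\ h (g v) = v').
  by apply: e_st; rewrite inE ?du'v' // -gu aut_dist ?duv.
by exists (g * h)%g; rewrite ?autM // !permM gu hu'.
Qed.

Lemma aut_invariant_const_at i (f : T -> T -> nat) :
  (forall g x y, g \in Defs.Aut e -> f (g x) (g y) = f x y) ->
  distance_transitive_at i -> exists c, forall x y, dist e x y = i -> f x y = c.
Proof.
move=> f_inv dt_i.
case: (pickP (fun p : T * T => dist e p.1 p.2 == i)) => [[a b] /eqP dab | none].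
  exists (f a b) => x y dxy; have [g g_aut [<- <-]] := dt_i _ _ _ _ dab dxy.
  exact: f_inv.
by exists 0 => x y /eqP dxy; move: (none (x, y)); rewrite /= dxy.
Qed.

End Transitivity.

Section Counting.

Variables (T : finType) (e : rel T).
Hypotheses (e_sym : symmetric e) (e_irr : irreflexive e) (e_conn : connected_graph e).

Lemma dist3_geodesic x z : dist e x z = 3 ->
  exists w y, [/\ dist e x w = 1, e w y, dist e x y = 2 & dist e w z = 2].
Proof.
move=> dxz; have [y dxy eyz] := dist_pred e_conn dxz.
have [w dxw ewy] := dist_pred e_conn dxy.
exists w, y; split=> //; apply/eqP; rewrite eqn_leq; apply/andP; split.
  have dwy : dist e w y = 1 by apply/eqP; rewrite dist1E.
  have dyz : dist e y z = 1 by apply/eqP; rewrite dist1E.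
  by apply: leq_trans (dist_triangle e_conn w y z) _; rewrite dwy dyz.
by have := dist_triangle e_conn x w z; rewrite dxz dxw.
Qed.

Lemma common_nbrs_le_b1 x w z :
  dist e x w = 1 -> dist e x z = 3 -> common_nbrs e w z <= b1 e x w.
Proof.
move=> dxw dxz; rewrite /common_nbrs /b1; apply/subset_leq_card/subsetP => v.
rewrite !inE => /andP[ewv ezv].
have dwv : dist e w v = 1 by apply/eqP; rewrite dist1E.
have dvz : dist e v z = 1 by apply/eqP; rewrite dist1E // e_sym.
rewrite ewv /= eqn_leq; apply/andP; split.
  by apply: leq_trans (dist_triangle e_conn x w v) _; rewrite dxw dwv.
by have := dist_triangle e_conn x v z; rewrite dxz dvz addn1.
Qed.

Lemma valency_le_common_nbrs_b1 x w y : e x w -> e w y -> dist e x y = 2 ->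
  #|[set v | e w v]|.+1 <= common_nbrs e x y + b1 e x w + b1 e y w.
Proof.
move=> exw ewy dxy; have ewx : e w x by rewrite e_sym.
set N := [set t | e x t && e y t].
have wN : w \in N by rewrite inE exw e_sym.
have nyx : y != x by rewrite -(dist_eq0 e_conn) dxy.
have nexy : ~~ e x y by rewrite -(dist1E e_conn) // dxy.
have cover : [set v | e w v] \subset
    N :\ w :|: [set t | e w t && (dist e x t == 2)] :|: [set t | e w t && (dist e y t == 2)].
  apply/subsetP => v; rewrite !inE => ewv; rewrite ewv /=.
  have [-> | nvx] := eqVneq v x.
    by rewrite (dist2_nbrs e_conn e_sym ewy ewx) ?orbT // 1?eq_sym 1?e_sym.
  have [-> | nvy] := eqVneq v y; first by rewrite dxy orbT.
  have [exv | nexv] := boolP (e x v); last by rewrite (dist2_nbrs e_conn e_sym ewx ewv) ?orbT.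
  have [eyv | neyv] := boolP (e y v); last by rewrite (dist2_nbrs e_conn e_sym ewy ewv) ?orbT.
  have nvw : v != w by apply: contraTneq ewv => ->; rewrite e_irr.
  by rewrite nvw.
rewrite /common_nbrs -/N (cardsD1 w N) wN add1n !addSn ltnS.
apply: leq_trans (subset_leq_card cover) _; apply: leq_trans (leq_card_setU _ _) _.
by rewrite leq_add2r leq_card_setU.
Qed.

End Counting.

Section TwoDistanceTransitive.

Variables (T : finType) (e : rel T).
Hypotheses (e_sym : symmetric e) (e_irr : irreflexive e) (e_conn : connected_graph e).
Hypotheses (dt1 : distance_transitive_at e 1) (dt2 : distance_transitive_at e 2).

Lemma edge_dist1 u w : e u w -> dist e u w = 1.
Proof. by move=> euw; apply/eqP; rewrite dist1E. Qed.

Lemma small_diameter_distance_transitive :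
  vertex_transitive e -> diameter e <= 2 -> distance_transitive e.
Proof.
move=> e_vt diam_le2 [|[|[|i]]] //; first exact: distance_transitive_at0.
move=> u v u' v' duv; have := leq_trans (dist_le_diameter e u v) diam_le2.
by rewrite duv.
Qed.

Lemma small_diameter_strongly_regular k :
  regular_of_valency e k -> diameter e <= 2 -> strongly_regular e.
Proof.
move=> e_reg diam_le2.
have [lam lamE] := aut_invariant_const_at (@aut_common_nbrs _ e) dt1.
have [mu muE] := aut_invariant_const_at (@aut_common_nbrs _ e) dt2.
exists k, lam, mu; split=> //; split=> [x y /edge_dist1/lamE // | x y nxy nexy].
apply/muE/eqP; rewrite eqn_leq (leq_trans (dist_le_diameter e x y)) //=.
by rewrite ltnNge dist_leqE // mem_ball1 negb_or eq_sym nxy.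
Qed.

Lemma large_diameter_b1_bounds k : regular_of_valency e k -> 3 <= diameter e ->
  forall u w x y, e u w -> dist e x y = 2 ->
    common_nbrs e x y <= b1 e u w /\ k + 1 <= 3 * b1 e u w.
Proof.
move=> e_reg diam_ge3.
have [c2 c2E] := aut_invariant_const_at (@aut_common_nbrs _ e) dt2.
have [b b1E] := aut_invariant_const_at (@aut_b1 _ e) dt1.
have [x [z dxz]] : exists x z, dist e x z = 3.
  have [x [y dxy]] := diameter_attained (leq_trans (isT : 0 < 3) diam_ge3).
  have [z dxz] : exists z, dist e x z = 3.
    by apply: (@exists_dist _ _ e_conn x y); rewrite dxy.
  by exists x, z.
have [w [y [dxw ewy dxy dwz]]] := dist3_geodesic e_irr e_conn dxz.
have c2_le_b : c2 <= b by rewrite -(c2E _ _ dwz) -(b1E _ _ dxw) common_nbrs_le_b1.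
have exw : e x w by rewrite -(dist1E e_conn) // dxw.
have := valency_le_common_nbrs_b1 e_sym e_irr e_conn exw ewy dxy.
rewrite e_reg (c2E _ _ dxy) (b1E _ _ dxw) (b1E y w) ?edge_dist1 1?e_sym // => k_lt.
move=> u v x' y' /edge_dist1/b1E-> /c2E->.
by split=> //; rewrite addn1 (leq_trans k_lt) // mulSn mul2n -addnn addnA !leq_add2r.
Qed.

End TwoDistanceTransitive.

Theorem lemma6p3 (T : finType) (e : rel T) (k : nat) :
  simple_graph e -> connected_graph e -> two_distance_transitive e ->
  regular_of_valency e k -> 3 <= k ->
  (distance_transitive e /\ strongly_regular e) \/
  (3 <= diameter e /\
   (forall u w x y : T, e u w -> dist e x y = 2 ->
      common_nbrs e x y <= b1 e u w /\ k + 1 <= 3 * b1 e u w)).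
Proof.
move=> [e_sym e_irr] e_conn [_ [e_vt [e_st1 e_st2]]] e_reg _.
have dt1 := distance_transitive_at_sphere e_vt e_st1.
have dt2 := distance_transitive_at_sphere e_vt e_st2.
have [diam_le2 | diam_gt2] := leqP (diameter e) 2.
  left; split; first exact: small_diameter_distance_transitive.
  exact: small_diameter_strongly_regular e_reg diam_le2.
by right; split=> //; apply: large_diameter_b1_bounds e_reg diam_gt2.
Qed.
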